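(* Let $k\ge 2$ and let $G=(V,E,w)$ be a $k$-colorable graph with positive vertex weights that is a $(k-1)$-stable instance of \texttt{MIS}. Then every optimal solution $x$ of the standard LP relaxation of \texttt{MIS} for $G$ that is half-integral ($x_u\in\{0,\tfrac12,1\}$ for all $u$) is integral, i.e. $x_u\in\{0,1\}$ for all $u\in V$ (and hence is the indicator vector of the maximum weight independent set).
   Context: \texttt{MIS}: given a graph $G=(V,E)$ with weights $w:V\to\mathbb{R}_{>0}$, find an independent set maximizing $w(I)=\sum_{u\in I}w_u$. The standard LP relaxation: maximize $\sum_{u\in V}w_ux_u$ subject to $x_u+x_v\le1$ for $(u,v)\in E$, $x_u\in[0,1]$ for $u\in V$ (it is known to always have a half-integral optimal solution). For $\gamma\ge1$, a $\gamma$-perturbation of $w$ is any $w':V\to\mathbb{R}$ with $w_u\le w'_u\le\gamma w_u$ for all $u$. The instance $G=(V,E,w)$ is $\gamma$-stable if it has a unique maximum weight independent set $I^*$ and $I^*$ remains the unique maximum weight independent set of $(V,E,w')$ for every $\gamma$-perturbation $w'$ of $w$. *)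

From HB Require Import structures.
From mathcomp Require Import all_boot all_order all_algebra.
Set Implicit Arguments. Unset Strict Implicit. Unset Printing Implicit Defensive.
Import Order.TTheory GRing.Theory Num.Theory.
Local Open Scope ring_scope.

Section MIS.
Variables (R : realFieldType) (T : finType).

Definition simple_graph (e : rel T) : Prop := symmetric e /\ irreflexive e.

Definition k_colorable (e : rel T) (k : nat) : Prop :=
  exists c : T -> 'I_k, forall u v, e u v -> c u != c v.

Definition independent (e : rel T) (I : {set T}) : Prop :=
  forall u v, u \in I -> v \in I -> ~~ e u v.

Definition set_weight (w : T -> R) (I : {set T}) : R := \sum_(u in I) w u.

Definition is_mwis (e : rel T) (w : T -> R) (I : {set T}) : Prop :=
  independent e I /\
  forall J : {set T}, independent e J -> set_weight w J <= set_weight w I.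

Definition unique_mwis (e : rel T) (w : T -> R) (I : {set T}) : Prop :=
  is_mwis e w I /\ forall J : {set T}, is_mwis e w J -> J = I.

Definition perturbation (gamma : R) (w w' : T -> R) : Prop :=
  forall u, w u <= w' u <= gamma * w u.

Definition stable (e : rel T) (gamma : R) (w : T -> R) : Prop :=
  exists Istar : {set T},
    unique_mwis e w Istar /\
    forall w' : T -> R, perturbation gamma w w' -> unique_mwis e w' Istar.

Definition lp_feasible (e : rel T) (x : T -> R) : Prop :=
  (forall u, 0 <= x u <= 1) /\ (forall u v, e u v -> x u + x v <= 1).

Definition lp_value (w x : T -> R) : R := \sum_(u : T) w u * x u.

Definition lp_optimal (e : rel T) (w x : T -> R) : Prop :=
  lp_feasible e x /\
  forall y : T -> R, lp_feasible e y -> lp_value w y <= lp_value w x.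

Definition half_integral (x : T -> R) : Prop :=
  forall u, x u = 0 \/ x u = 2^-1 \/ x u = 1.

Definition integral (x : T -> R) : Prop :=
  forall u, x u = 0 \/ x u = 1.

End MIS.

From HB Require Import structures.
From mathcomp Require Import all_boot all_order all_algebra.
From mathcomp Require Import ring lra.
Import Order.TTheory GRing.Theory Num.Theory.
Set Implicit Arguments. Unset Strict Implicit. Unset Printing Implicit Defensive.
Local Open Scope ring_scope.

(* Let I be the maximum weight independent set and x a half-integral LP optimum
   with a vertex of value 1/2.  For each colour i, the vertices with x = 1 together
   with the colour-i vertices with x = 1/2 form an independent set J_i.  Multiplying
   the weights of J_i \ I by k - 1 is a (k-1)-perturbation, so stability gives
   (k-1) w(J_i \ I) <= w(I \ J_i), strictly for some i.  Summed over the k colours,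
   a vertex u outside I is counted at least 2 x_u times on the left and a vertex u
   of I at most 2 (k-1) (1 - x_u) times on the right, whence w.x < w(I): x is not
   optimal. *)

Lemma natr_pred_ge1 (R : numDomainType) (k : nat) : (2 <= k)%N -> 1 <= k.-1%:R :> R.
Proof. by move=> k_ge2; rewrite ler1n -ltnS prednK // ltnW. Qed.

Section Weights.
Variables (R : realFieldType) (T : finType).
Implicit Types (w x : T -> R) (A B : {set T}).

Lemma set_weightID w A B :
  set_weight w A = set_weight w (A :&: B) + set_weight w (A :\: B).
Proof. exact: big_setID. Qed.

Lemma set_weight0 w : set_weight w set0 = 0.
Proof. exact: big_set0. Qed.

Lemma sum_set_weight (I : finType) w (A : I -> {set T}) :
  \sum_i set_weight w (A i) = \sum_u #|[set i | u \in A i]|%:R * w u.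
Proof.
rewrite /set_weight; under eq_bigr do rewrite big_mkcond; rewrite exchange_big.
apply: eq_bigr => u _; rewrite -big_mkcond sumr_const mulr_natl.
by congr (_ *+ _); apply: eq_card => i; rewrite inE.
Qed.

End Weights.

Section StableGain.
Variables (R : realFieldType) (T : finType) (e : rel T) (w : T -> R).
Variables (g : R) (I : {set T}).
Hypotheses (g_ge1 : 1 <= g) (w_ge0 : forall u, 0 <= w u).
Hypothesis I_stable :
  forall w' : T -> R, perturbation g w w' -> unique_mwis e w' I.

(* Scale the weights of J :\: I by g: I must still beat J strictly. *)
Lemma stable_gain_lt (J : {set T}) :
  independent e J -> J != I ->
  g * set_weight w (J :\: I) < set_weight w (I :\: J).
Proof.
move=> indJ neqJI.
pose w' u := if u \in J :\: I then g * w u else w u.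
have pert : perturbation g w w'.
  move=> u; have le_gw : w u <= g * w u by exact: ler_peMl.
  by rewrite /w'; case: ifP => _; rewrite lexx ?le_gw.
have [[_ maxI] uniqI] := I_stable pert.
have w'_I : {in I, w' =1 w} by move=> u uI; rewrite /w' inE uI.
have w'J : set_weight w' J = set_weight w (J :&: I) + g * set_weight w (J :\: I).
  rewrite (set_weightID w' J I) /set_weight mulr_sumr; congr (_ + _).
    by apply: eq_bigr => u; rewrite inE => /andP[_ /w'_I].
  by apply: eq_bigr => u; rewrite /w' => ->.
have w'I : set_weight w' I = set_weight w (J :&: I) + set_weight w (I :\: J).
  rewrite (set_weightID w' I J) setIC; congr (_ + _); apply: eq_bigr => u;
    by rewrite inE => /andP[_ /w'_I].
rewrite ltNge; apply: contra neqJI => le_gain; apply/eqP/uniqI; split=> // J' indJ'.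
by apply: (le_trans (maxI J' indJ')); rewrite w'J w'I lerD2l.
Qed.

Lemma stable_gain_le (J : {set T}) :
  independent e J -> g * set_weight w (J :\: I) <= set_weight w (I :\: J).
Proof.
move=> indJ; have [->|neqJI] := eqVneq J I; first by rewrite setDv set_weight0 mulr0.
exact/ltW/stable_gain_lt.
Qed.

Lemma stable_gain_sum (F : finType) (J : F -> {set T}) :
  (forall i, independent e (J i)) -> (exists i, J i != I) ->
  g * \sum_i set_weight w (J i :\: I) < \sum_i set_weight w (I :\: J i).
Proof.
move=> indJ [i0 neq_i0]; rewrite mulr_sumr (bigD1 i0) // [X in _ < X](bigD1 i0) //=.
by rewrite ltr_leD ?stable_gain_lt //; apply: ler_sum => i _; apply: stable_gain_le.
Qed.

End StableGain.

Section ColorRounds.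
Variables (R : realFieldType) (T : finType) (e : rel T) (k : nat).
Variables (x : T -> R) (c : T -> 'I_k).

Definition color_round (i : 'I_k) : {set T} :=
  [set u | (x u == 1) || ((x u == 2^-1) && (c u == i))].

Lemma color_round_independent i :
  lp_feasible e x -> (forall u v, e u v -> c u != c v) ->
  independent e (color_round i).
Proof.
move=> [_ x_edge] c_proper u v; rewrite !inE => u_in v_in; apply/negP => euv.
have := x_edge u v euv; have := c_proper u v euv.
by case/orP: u_in => [/eqP-> | /andP[/eqP-> /eqP->]];
   case/orP: v_in => [/eqP-> | /andP[/eqP-> /eqP->]]; rewrite ?eqxx //; lra.
Qed.

Lemma card_color_round u :
  #|[set i | u \in color_round i]| =
  if x u == 1 then k else if x u == 2^-1 then 1%N else 0%N.
Proof.
case: ifP => [x1 | xn1].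
  have -> : [set i | u \in color_round i] = setT by apply/setP => i; rewrite !inE x1.
  by rewrite cardsT card_ord.
case: ifP => [xh | xnh].
  have -> : [set i | u \in color_round i] = [set c u].
    by apply/setP => i; rewrite !inE xn1 xh eq_sym.
  by rewrite cards1.
have -> : [set i | u \in color_round i] = set0 by apply/setP => i; rewrite !inE xn1 xnh.
by rewrite cards0.
Qed.

Lemma card_color_roundC u :
  #|[set i | u \notin color_round i]| = (k - #|[set i | u \in color_round i]|)%N.
Proof.
have := cardsC [set i | u \in color_round i]; rewrite card_ord => cardC.
rewrite -[X in (X - _)%N]cardC addKn.
by apply: eq_card => i; rewrite !inE.
Qed.

Hypotheses (k_ge2 : (2 <= k)%N) (x_half : half_integral x).

Let k_pred : k%:R = k.-1%:R + 1 :> R.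
Proof. by rewrite natr1 prednK // ltnW. Qed.

Let half_tests u :
  [/\ x u = 0, (x u == 1) = false & (x u == 2^-1) = false] \/
  [/\ x u = 2^-1, (x u == 1) = false & x u == 2^-1] \/ (x u = 1 /\ x u == 1).
Proof.
case: (x_half u) => [|[|]] ->; rewrite ?eqxx; [left | right; left | by right; right].
  by rewrite (eq_sym 0) oner_eq0 eq_sym invr_eq0 pnatr_eq0.
by rewrite invr_eq1 pnatr_eq1.
Qed.

Lemma card_color_round_ge u : 2 * x u <= #|[set i | u \in color_round i]|%:R.
Proof.
rewrite card_color_round.
case: (half_tests u) => [[-> -> ->] | [[-> -> ->] | [-> ->]]].
- by rewrite mulr0.
- by rewrite mulfV ?pnatr_eq0.
- by rewrite mulr1 ler_nat.
Qed.

Lemma card_color_roundC_le u :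
  #|[set i | u \notin color_round i]|%:R <= 2 * k.-1%:R * (1 - x u).
Proof.
rewrite card_color_roundC card_color_round.
case: (half_tests u) => [[-> -> ->] | [[-> -> ->] | [-> ->]]].
- have : 1 <= k.-1%:R :> R by exact: natr_pred_ge1.
  by rewrite subn0 k_pred; lra.
- rewrite subn1; lra.
- by rewrite subnn subrr mulr0.
Qed.

Variables (w : T -> R) (I : {set T}).
Hypothesis w_ge0 : forall u, 0 <= w u.

Lemma sum_color_round_diff_ge :
  2 * \sum_(u in ~: I) w u * x u <= \sum_i set_weight w (color_round i :\: I).
Proof.
rewrite sum_set_weight mulr_sumr big_mkcond /=; apply: ler_sum => u _.
rewrite inE; have [uI | uI] /= := boolP (u \in I).
  by rewrite mulr_ge0 ?ler0n.
have -> : [set i | u \in color_round i :\: I] = [set i | u \in color_round i].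
  by apply/setP => i; rewrite !inE uI.
by rewrite (mulrC (w u)) mulrA ler_wpM2r ?card_color_round_ge.
Qed.

Lemma sum_color_round_diffC_le :
  \sum_i set_weight w (I :\: color_round i) <=
  2 * k.-1%:R * \sum_(u in I) w u * (1 - x u).
Proof.
rewrite sum_set_weight mulr_sumr [X in _ <= X]big_mkcond /=; apply: ler_sum => u _.
have [uI | uI] := boolP (u \in I).
  have -> : [set i | u \in I :\: color_round i] = [set i | u \notin color_round i].
    by apply/setP => i; rewrite !inE uI andbT.
  by rewrite (mulrC (w u)) mulrA ler_wpM2r ?card_color_roundC_le.
have -> : [set i | u \in I :\: color_round i] = set0.
  by apply/setP => i; rewrite !inE (negbTE uI) andbF.
by rewrite cards0 mul0r.
Qed.

Lemma exists_color_round_neq u : x u = 2^-1 -> exists i, color_round i != I.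
Proof.
move=> xu; have [j neq_j] : exists j, j != c u.
  have [c0 | c_neq0] := eqVneq (c u) (Ordinal (ltnW k_ge2)).
    by exists (Ordinal k_ge2); rewrite c0.
  by exists (Ordinal (ltnW k_ge2)); rewrite eq_sym.
have u_cu : u \in color_round (c u) by rewrite inE xu !eqxx orbT.
have u_j : u \notin color_round j.
  by rewrite inE xu eqxx (eq_sym (c u)) (negbTE neq_j) orbF invr_eq1 pnatr_eq1.
have [cuI | ] := eqVneq (color_round (c u)) I; last by exists (c u).
by exists j; apply: contraNneq u_j => ->; rewrite -cuI.
Qed.

End ColorRounds.

Section LPRelaxation.
Variables (R : realFieldType) (T : finType) (e : rel T) (w : T -> R).
Implicit Types (I : {set T}) (x : T -> R).

Lemma lp_feasible_indicator I :
  independent e I -> lp_feasible e (fun u => (u \in I)%:R : R).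
Proof.
move=> indI; split=> [u | u v euv]; first by case: (u \in I); rewrite ?lexx ?ler01.
have : ~~ ((u \in I) && (v \in I)).
  by apply/andP => -[uI vI]; move: (indI u v uI vI); rewrite euv.
by case: (u \in I); case: (v \in I) => //= _; rewrite ?add0r ?addr0 ?lexx ?ler01.
Qed.

Lemma lp_value_indicator I : lp_value w (fun u => (u \in I)%:R) = set_weight w I.
Proof.
rewrite /lp_value /set_weight [RHS]big_mkcond /=.
by apply: eq_bigr => u _; case: (u \in I); rewrite ?mulr1 ?mulr0.
Qed.

Lemma set_weight_sub_lp_value I x :
  set_weight w I - lp_value w x =
  \sum_(u in I) w u * (1 - x u) - \sum_(u in ~: I) w u * x u.
Proof.
rewrite /lp_value (bigID (mem I)) /= /set_weight.
under [\sum_(u in ~: I) _]eq_bigl do rewrite inE.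
rewrite opprD addrA -sumrB; congr (_ - _); apply: eq_bigr => u _; ring.
Qed.

End LPRelaxation.

Theorem mainTheorem2 (R : realFieldType) (T : finType) (e : rel T)
  (w : T -> R) (k : nat) :
  (2 <= k)%N ->
  simple_graph e ->
  k_colorable e k ->
  (forall u, 0 < w u) ->
  stable e (k.-1)%:R w ->
  forall x : T -> R, lp_optimal e w x -> half_integral x -> integral x.
Proof.
move=> k_ge2 _ [c c_proper] w_gt0 [I [[[indI _] _] I_stable]] x [x_feas x_opt] x_half u.
case: (x_half u) => [|[xu|]]; [by left | exfalso | by right].
have w_ge0 v : 0 <= w v by exact: ltW.
have g_ge1 : 1 <= k.-1%:R :> R by exact: natr_pred_ge1.
have gain := stable_gain_sum g_ge1 w_ge0 I_stable
  (fun i => color_round_independent (i := i) x_feas c_proper)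
  (exists_color_round_neq c k_ge2 I xu).
have x_lt_I : \sum_(v in ~: I) w v * x v < \sum_(v in I) w v * (1 - x v).
  have := sum_color_round_diff_ge c k_ge2 x_half I w_ge0.
  have := sum_color_round_diffC_le c k_ge2 x_half I w_ge0.
  nra.
have := x_opt _ (lp_feasible_indicator R indI).
by rewrite lp_value_indicator leNgt -subr_gt0 set_weight_sub_lp_value subr_gt0 x_lt_I.
Qed.
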